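(* Let $R$ be a proper normed division ring and let $M$ be a Polish $R$-module with $\dim_R(M)$ uncountable. Then there is a nonempty perfect subset of $M$ which is linearly independent over $R$.
   Context: A norm on a ring $R$ is a function $|\cdot|\colon R\to[0,\infty)$ such that $(a,b)\mapsto|a-b|$ is a metric and $|rs|\le|r||s|$; it is proper if every closed ball is compact; a proper normed ring is a ring with a proper norm, topologized by the metric. A division ring is a ring in which every nonzero element has a two-sided inverse. A Polish $R$-module is a topological left $R$-module whose topology is Polish. *)

From HB Require Import structures.
From mathcomp Require Import all_boot all_order all_algebra.
From mathcomp Require Import all_classical reals topology.
Set Implicit Arguments. Unset Strict Implicit. Unset Printing Implicit Defensive.
Import Order.TTheory GRing.Theory Num.Theory.
Local Open Scope classical_set_scope.
Local Open Scope ring_scope.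

HB.structure Definition TopBaseAddMagma := {M of Algebra.BaseAddMagma M & Topological M}.
HB.structure Definition TopNmodule := {M of GRing.Nmodule M & Topological M}.
HB.structure Definition TopZmodule := {M of GRing.Zmodule M & Topological M}.

#[short(type="topLmodType")]
HB.structure Definition TopLmodule (K : pzRingType) :=
  {M of GRing.Lmodule K M & Topological M}.

(* A (unital) ring carrying a topology (to be constrained to the norm topology). *)
#[short(type="topUnitRingType")]
HB.structure Definition TopUnitRing := {K of GRing.UnitRing K & Topological K}.

Definition division_ring (K : unitRingType) : Prop :=
  forall x : K, x != 0 -> x \is a GRing.unit.

Definition ring_norm (R : realType) (K : unitRingType) (nrm : K -> R) : Prop :=
  [/\ forall x, 0 <= nrm x,
      forall a b, nrm (a - b) = 0 <-> a = b,
      forall a b, nrm (a - b) = nrm (b - a),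
      forall a b c, nrm (a - c) <= nrm (a - b) + nrm (b - c)
    & forall r s, nrm (r * s) <= nrm r * nrm s].

Definition metric_topology (R : realType) (T : topologicalType)
  (d : T -> T -> R) : Prop :=
  forall (x : T) (A : set T),
    nbhs x A <-> exists2 e : R, 0 < e & [set y | d x y < e] `<=` A.

Definition proper_norm (R : realType) (K : topUnitRingType) (nrm : K -> R) :=
  forall (x : K) (r : R), compact [set y | nrm (x - y) <= r].

Definition proper_normed_division_ring (R : realType) (K : topUnitRingType)
  (nrm : K -> R) : Prop :=
  [/\ division_ring K, ring_norm nrm,
      metric_topology (fun a b : K => nrm (a - b)) & proper_norm nrm].

Definition topological_module (K : topUnitRingType) (M : topLmodType K) : Prop :=
  [/\ continuous (fun p : M * M => p.1 + p.2),
      continuous (fun x : M => - x)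
    & continuous (fun p : K * M => p.1 *: p.2)].

Definition is_metric (R : realType) (T : Type) (d : T -> T -> R) : Prop :=
  [/\ forall x y, 0 <= d x y,
      forall x y, d x y = 0 <-> x = y,
      forall x y, d x y = d y x
    & forall x y z, d x z <= d x y + d y z].

Definition polish_space (R : realType) (T : topologicalType) : Prop :=
  (exists D : set T, countable D /\ closure D = setT) /\
  exists d : T -> T -> R,
    [/\ is_metric d, metric_topology d &
        forall u : nat -> T,
          (forall e : R, 0 < e -> exists N : nat,
              forall m n, (N <= m)%N -> (N <= n)%N -> d (u m) (u n) < e) ->
          exists l : T, u @ \oo --> l].

Definition lin_indep (K : pzRingType) (M : lmodType K) (S : set M) : Prop :=
  forall (s : seq M) (c : M -> K), uniq s -> (forall x, x \in s -> S x) ->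
    \sum_(x <- s) c x *: x = 0 -> forall x, x \in s -> c x = 0.

Definition spanning (K : pzRingType) (M : lmodType K) (S : set M) : Prop :=
  forall v : M, exists (s : seq M) (c : M -> K),
    (forall x, x \in s -> S x) /\ v = \sum_(x <- s) c x *: x.

Definition is_basis (K : pzRingType) (M : lmodType K) (S : set M) : Prop :=
  lin_indep S /\ spanning S.

Definition uncountable_dim (K : pzRingType) (M : lmodType K) : Prop :=
  exists B : set M, is_basis B /\ ~ countable B.

From HB Require Import structures.
From mathcomp Require Import all_boot all_order all_algebra.
From mathcomp Require Import all_classical reals topology cantor archimedean.
From mathcomp Require Import zify lra.
Import Order.TTheory GRing.Theory Num.Theory.
Local Open Scope classical_set_scope.
Local Open Scope ring_scope.
Set Implicit Arguments. Unset Strict Implicit. Unset Printing Implicit Defensive.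

(* Fix a complete metric d inducing the topology of M, a
   countable dense set D and an uncountable basis B.
   1. By compactness, "z is not a combination of p 0, ..., p (N-1) with
      coefficients in compact sets C j" is an open condition on (p, z); this
      applies to closed balls of K, which are compact.
   2. The span of a countable set has empty interior in M: otherwise it would
      be an open subgroup W with M = D + W spanned by a countable set, while
      a countable set only spans the span of countably many basis vectors.
      Hence any finite family can be perturbed into a free one.
   3. From 1 and 2 we build a binary tree of points X n j (j < 2^n) with
      radii r n halving at each level: the children of X n j lie within
      r n / 4 of it, and no family r (n+1)-close to level n+1 satisfies a
      relation with one coefficient -1 and the others of norm <= n+1.
   4. Along each branch a of the Cantor space the tree points form a Cauchy
      sequence; the limits f a define a continuous injection of the Cantor
      space whose image is linearly independent (a relation would contradict
      3 at a deep enough level) and perfect (compact, without isolated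
      points). *)

(* Level n of the tree built below
   is indexed by these codes, and dropping the last digit is halving. *)
Fixpoint code (a : nat -> bool) (n : nat) : nat :=
  if n is n'.+1 then a n' + (code a n').*2 else 0.

Lemma code_lt a n : (code a n < 2 ^ n)%N.
Proof. by elim: n => [//|n IH] /=; rewrite expnS; case: (a n) => /=; lia. Qed.

Lemma code_half a n : (code a n.+1)./2 = code a n.
Proof. by rewrite /= half_bit_double. Qed.

Lemma code_eq a b n : (forall i, (i < n)%N -> a i = b i) -> code a n = code b n.
Proof.
elim: n => [//|n IH] H /=; rewrite H // IH // => i iN; apply: H; exact: ltnW.
Qed.

Lemma code_inj a b n : code a n = code b n -> forall i, (i < n)%N -> a i = b i.
Proof.
elim: n => [//|n IH] /= E.
have E1 : code a n = code b n by rewrite -(code_half a) -(code_half b) /= E.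
move=> i; rewrite ltnS leq_eqVlt => /orP [/eqP ->|iN]; last exact: IH.
by move: E; rewrite E1 => /addIn; case: (a n); case: (b n).
Qed.

Lemma prefix_nbhs (a : cantor_space) n :
  nbhs a [set b : cantor_space | forall i, (i < n)%N -> b i = a i].
Proof.
elim: n => [|n IH]; first by apply: filterS filterT.
have Hn : nbhs a [set b : cantor_space | b n = a n].
  by apply: (@proj_continuous nat (fun _ => bool) n a [set a n]); exact: discrete_set1.
apply: filterS (filterI IH Hn) => b [H1 H2] i.
by rewrite ltnS leq_eqVlt => /orP [/eqP ->|iN]; [|apply: H1].
Qed.

Lemma eventually_forall_in (T : eqType) (s : seq T) (Q : T -> nat -> Prop) :
  (forall x, x \in s -> exists n0, forall n, (n0 <= n)%N -> Q x n) ->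
  exists n0, forall n, (n0 <= n)%N -> forall x, x \in s -> Q x n.
Proof.
elim: s => [|y s IH] H; first by exists 0%N.
have [n1 H1] := IH (fun x xs => H x (mem_behead (s := y :: s) xs)).
have [n2 H2] := H y (mem_head _ _).
exists (maxn n1 n2) => n; rewrite geq_max => /andP [h1 h2] x.
by rewrite inE => /orP [/eqP ->|xs]; [apply: H2 | apply: H1].
Qed.

Lemma codes_uniq (s : seq cantor_space) : uniq s ->
  exists n0, forall n, (n0 <= n)%N -> uniq [seq code a n | a <- s].
Proof.
elim: s => [|a s IH] /=; first by exists 0%N.
move=> /andP [ans us]; have [n1 H1] := IH us.
have [n2 H2] : exists n0, forall n, (n0 <= n)%N -> forall b, b \in s ->
    code a n != code b n.
  apply: eventually_forall_in => b bs.
  have [i ai] : exists i, a i != b i.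
    apply/not_existsP => H; move: ans; rewrite (_ : a = b) ?bs //.
    by apply: funext => i; apply/eqP/negbNE/negP/H.
  exists i.+1 => n iN; apply/negP => /eqP /code_inj /(_ i iN) /eqP.
  exact/negP.
exists (maxn n1 n2) => n; rewrite geq_max => /andP [h1 h2].
rewrite H1 // andbT; apply/negP => /mapP [b bs E].
by move: (H2 n h2 b bs); rewrite E eqxx.
Qed.

Lemma countable_setU (T : Type) (A B : set T) : countable A -> countable B ->
  countable (A `|` B).
Proof.
move=> cA cB.
have -> : A `|` B = \bigcup_(b in [set: bool]) (if b then A else B).
  apply/seteqP; split => x.
    by case => [Ax|Bx]; [exists true | exists false].
  by case=> [] [] _ /= H; [left|right].
by apply: bigcup_countable => [|[]]; first exact: countableP.
Qed.

Lemma uniform_radius (R : realDomainType) N (P : nat -> R -> Prop) :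
  (forall i r r', P i r -> 0 < r' -> r' <= r -> P i r') ->
  (forall i, (i < N)%N -> exists2 r, 0 < r & P i r) ->
  exists2 r, 0 < r & forall i, (i < N)%N -> P i r.
Proof.
move=> Pshrink; elim: N => [|N IH] H; first by exists 1 => //; rewrite ltr01.
have [r1 r10 H1] := IH (fun i iN => H i (ltnW iN)).
have [r2 r20 H2] := H N (ltnSn N).
have m0 : 0 < Num.min r1 r2 by rewrite lt_min r10 r20.
exists (Num.min r1 r2) => // i; rewrite ltnS leq_eqVlt => /orP [/eqP ->|iN].
  by apply: Pshrink H2 _ _; rewrite // ge_min lexx orbT.
by apply: Pshrink (H1 i iN) _ _; rewrite // ge_min lexx.
Qed.

Lemma uniq_map_inj_in (T U : eqType) (h : T -> U) (L : seq T) :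
  uniq (map h L) -> {in L &, injective h}.
Proof.
elim: L => // x L IH /= /andP [hx uL] p p'; rewrite !inE.
move=> /orP [/eqP ->|pL] /orP [/eqP ->|p'L] E //.
- by move: hx; rewrite E map_f.
- by move: hx; rewrite -E map_f.
- exact: IH.
Qed.

Lemma sum_over_image (V : nmodType) (T : eqType) (L : seq T) (h : T -> nat)
    (F : nat -> V) (G : T -> V) N :
  uniq (map h L) -> (forall t, t \in L -> (h t < N)%N) ->
  (forall t, t \in L -> F (h t) = G t) -> (forall j, j \notin map h L -> F j = 0) ->
  \sum_(0 <= j < N) F j = \sum_(t <- L) G t.
Proof.
move=> uL hN FG F0.
have -> : \sum_(t <- L) G t = \sum_(j <- map h L) F j.
  by rewrite big_map; apply: eq_big_seq => t tL; rewrite FG.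
rewrite (bigID (mem (map h L))) /=.
rewrite [X in _ + X]big1 ?addr0 => [|j /F0 //].
rewrite -big_filter; apply: perm_big; apply: uniq_perm => //.
  by rewrite filter_uniq // iota_uniq.
move=> j; rewrite mem_filter mem_index_iota andbC.
case jL: (j \in map h L); rewrite ?andbF ?andbT //.
by move/mapP: jL => [t /hN ? ->].
Qed.

Section Span.
Variables (K : nzRingType) (M : lmodType K).

Definition in_span (S : set M) (v : M) : Prop :=
  exists l : seq (K * M), (forall p, p \in l -> S p.2) /\
    v = \sum_(p <- l) p.1 *: p.2.

Lemma in_span0 S : in_span S 0.
Proof. by exists [::]; rewrite big_nil. Qed.

Lemma in_span_mem S x : S x -> in_span S x.
Proof.
by move=> Sx; exists [:: (1, x)]; rewrite big_seq1 scale1r; split => // p /[!inE] /eqP ->.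
Qed.

Lemma in_spanD S u v : in_span S u -> in_span S v -> in_span S (u + v).
Proof.
move=> [lu [Hu ->]] [lv [Hv ->]]; exists (lu ++ lv); rewrite big_cat.
by split => // p; rewrite mem_cat => /orP [/Hu|/Hv].
Qed.

Lemma in_spanZ S (k : K) v : in_span S v -> in_span S (k *: v).
Proof.
move=> [l [Hl ->]]; exists [seq (k * p.1, p.2) | p <- l]; split.
  by move=> p /mapP [p' p'l ->]; exact: Hl p'l.
by rewrite big_map scaler_sumr; apply: eq_bigr => p _; rewrite scalerA.
Qed.

Lemma in_spanB S u v : in_span S u -> in_span S v -> in_span S (u - v).
Proof. by move=> Su Sv; rewrite -scaleN1r; apply/in_spanD/in_spanZ. Qed.

Lemma in_span_sum S (q : nat -> M) (c : nat -> K) N :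
  (forall j, (j < N)%N -> S (q j)) -> in_span S (\sum_(0 <= j < N) c j *: q j).
Proof.
move=> Sq; rewrite big_nat; apply: (big_ind (in_span S)).
- exact: in_span0.
- exact: in_spanD.
- by move=> j /andP [_ jN]; apply/in_spanZ/in_span_mem/Sq.
Qed.

Lemma in_span_trans S T v : (forall x, S x -> in_span T x) ->
  in_span S v -> in_span T v.
Proof.
move=> ST [l [Hl ->]]; rewrite big_seq; apply: (big_ind (in_span T)).
- exact: in_span0.
- exact: in_spanD.
- by move=> p pl; apply/in_spanZ/ST/Hl.
Qed.

Lemma sum_collect (l : seq (K * M)) : \sum_(p <- l) p.1 *: p.2 =
  \sum_(x <- undup (map snd l)) (\sum_(p <- l | p.2 == x) p.1) *: x.
Proof.
under [RHS]eq_bigr => x _ do rewrite scaler_suml big_mkcond /=.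
rewrite exchange_big /=; apply: eq_big_seq => p pl.
rewrite (bigD1_seq p.2) ?undup_uniq ?mem_undup ?map_f //= eqxx big1 ?addr0 //.
by move=> x /negbTE; rewrite eq_sym => ->.
Qed.

Lemma indep_notin_span (B S : set M) b : lin_indep B -> S `<=` B ->
  B b -> ~ S b -> ~ in_span S b.
Proof.
move=> Bind SB Bb nSb [l [Hl bE]].
pose s := undup (map snd l).
pose c x := if x == b then -1 else \sum_(p <- l | p.2 == x) p.1.
have bs : b \notin s.
  by apply/negP; rewrite mem_undup => /mapP [p /Hl Sp bp]; apply: nSb; rewrite bp.
have us : uniq (b :: s) by rewrite /= bs undup_uniq.
have sB : forall x, x \in b :: s -> B x.
  move=> x; rewrite inE mem_undup => /orP [/eqP -> //|/mapP [p /Hl Sp ->]].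
  exact: SB.
have sum0 : \sum_(x <- b :: s) c x *: x = 0.
  rewrite big_cons {1}/c eqxx scaleN1r bE sum_collect addrC.
  apply/eqP; rewrite subr_eq0; apply/eqP/eq_big_seq => x xs.
  by rewrite /c; case: eqP xs bs => // -> ->.
by move/eqP: (Bind _ c us sB sum0 b (mem_head _ _)); rewrite /c eqxx oppr_eq0 oner_eq0.
Qed.

End Span.

Section ModuleMetric.
Variables (R : realType) (K : topUnitRingType) (M : topLmodType K).
Variable d : M -> M -> R.
Hypothesis d_ge0 : forall x y, 0 <= d x y.
Hypothesis d_eq0 : forall x y, d x y = 0 <-> x = y.
Hypothesis d_sym : forall x y, d x y = d y x.
Hypothesis d_tri : forall x y z, d x z <= d x y + d y z.
Hypothesis d_top : metric_topology d.
Hypothesis add_cont : continuous (fun p : M * M => p.1 + p.2).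
Hypothesis opp_cont : continuous (fun x : M => - x).
Hypothesis scale_cont : continuous (fun p : K * M => p.1 *: p.2).

Lemma dxx x : d x x = 0. Proof. exact/d_eq0. Qed.

Lemma nbhs_ball (x : M) e : 0 < e -> nbhs x [set y | d x y < e].
Proof. by move=> e0; apply/d_top; exists e. Qed.

Lemma cont_add (a b : M) e : 0 < e -> exists2 del, 0 < del &
  forall a' b', d a a' < del -> d b b' < del -> d (a + b) (a' + b') < e.
Proof.
move=> e0; have := @add_cont (a, b) _ (nbhs_ball (a + b) e0).
move=> [[U V] /= [/d_top [e1 e10 HU] /d_top [e2 e20 HV]] HUV].
exists (Num.min e1 e2); first by rewrite lt_min e10 e20.
move=> a' b' ha hb; apply: (HUV (a', b')); split.
  by apply: HU; apply: lt_le_trans ha _; rewrite ge_min lexx.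
by apply: HV; apply: lt_le_trans hb _; rewrite ge_min lexx orbT.
Qed.

Lemma cont_sub (a b : M) e : 0 < e -> exists2 del, 0 < del &
  forall a' b', d a a' < del -> d b b' < del -> d (a - b) (a' - b') < e.
Proof.
move=> e0; have [e1 e10 H1] := cont_add a (- b) e0.
have /d_top [e2 e20 H2] := @opp_cont b _ (nbhs_ball (- b) e10).
exists (Num.min e1 e2); first by rewrite lt_min e10 e20.
move=> a' b' ha hb; apply: H1.
  by apply: lt_le_trans ha _; rewrite ge_min lexx.
by apply: H2; apply: lt_le_trans hb _; rewrite ge_min lexx orbT.
Qed.

Lemma cont_scale (c : K) (x : M) e : 0 < e -> exists U, nbhs c U /\
  exists2 del, 0 < del & forall c' y, U c' -> d x y < del -> d (c *: x) (c' *: y) < e.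
Proof.
move=> e0; have := @scale_cont (c, x) _ (nbhs_ball (c *: x) e0).
move=> [[U V] /= [HU /d_top [e2 e20 HV]] HUV].
exists U; split => //; exists e2 => // c' y Uc' hy.
by apply: (HUV (c', y)); split => //; apply: HV.
Qed.

Lemma metric_hausdorff : hausdorff_space M.
Proof.
move=> p q cl; apply: contrapT => npq.
have e0 : 0 < d p q / 2.
  rewrite divr_gt0 // lt_neqAle d_ge0 andbT; apply/eqP => /esym /d_eq0.
  exact: npq.
have [y [/= h1 h2]] := cl _ _ (nbhs_ball p e0) (nbhs_ball q e0).
by have := d_tri p y q; rewrite (d_sym y q); lra.
Qed.

Lemma lim_le (u : nat -> M) (l x : M) s n : u @ \oo --> l ->
  (forall m, (n <= m)%N -> d x (u m) <= s) -> d x l <= s.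
Proof.
move=> ul H; rewrite leNgt; apply/negP => hs.
have e0 : 0 < d x l - s by rewrite subr_gt0.
have [N _ HN] := ul _ (nbhs_ball l e0).
have := HN (maxn N n) (leq_maxl _ _); have := H (maxn N n) (leq_maxr _ _).
by have := d_tri x (u (maxn N n)) l; rewrite (d_sym (u _) l) /=; lra.
Qed.

Definition combination (C : nat -> set K) N (p : nat -> M) (z : M) :=
  exists c : nat -> K, (forall j, (j < N)%N -> C j (c j)) /\
    z = \sum_(0 <= j < N) c j *: p j.

Lemma combinationS C N p z : combination C N.+1 p z <->
  exists2 c, C N c & combination C N p (z - c *: p N).
Proof.
split.
  move=> [c [Hc ->]]; exists (c N); first exact: Hc.
  exists c; split; last by rewrite big_nat_recr //= addrK.
  by move=> j jN; apply/Hc/ltnW.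
move=> [cN CN [c [Hc E]]]; exists (fun j => if j == N then cN else c j); split.
  move=> j; rewrite ltnS leq_eqVlt => /orP [/eqP ->|jN]; first by rewrite eqxx.
  by rewrite (ltn_eqF jN); apply: Hc.
rewrite big_nat_recr //= eqxx -[z](subrK (cN *: p N)) E; congr (_ + _).
by apply: eq_big_nat => j /andP [_ jN]; rewrite (ltn_eqF jN).
Qed.

Definition near_family N (p : nat -> M) (z : M) :=
  filter_from [set r : R | 0 < r] (fun r => [set i : (nat -> M) * M |
    (forall j, (j < N)%N -> d (p j) (i.1 j) < r) /\ d z i.2 < r]).

Lemma near_family_filter N p z : Filter (near_family N p z).
Proof.
apply: filter_from_filter; first by exists 1 => //=; rewrite ltr01.
move=> r1 r2 r10 r20; exists (Num.min r1 r2) => /=; first by rewrite lt_min r10 r20.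
move=> [q y] /= [Hq Hy].
have [y1 y2] : d z y < r1 /\ d z y < r2 by move: Hy; rewrite lt_min => /andP [].
by split; split => // j jN; have := Hq j jN; rewrite lt_min => /andP [].
Qed.

(* Not being a combination with coefficients in given compact sets is an open
   condition on the family and the point: by induction on the length, using
   compactness of C N to make the radius uniform in the last coefficient. *)
Lemma combination_robust (C : nat -> set K) : (forall j, compact (C j)) ->
  forall N p z0, ~ combination C N p z0 ->
  exists2 r, 0 < r & forall q z, (forall j, (j < N)%N -> d (p j) (q j) < r) ->
    d z0 z < r -> ~ combination C N q z.
Proof.
move=> C_compact; elim=> [|N IH] p z0 nz0.
  have z00 : z0 <> 0.
    by move=> z0E; apply: nz0; exists (fun=> 0); rewrite big_geq.
  exists (d z0 0); first by rewrite lt_neqAle d_ge0 andbT eq_sym; apply/eqP/d_eq0.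
  by move=> q z _ hz [c [_ zE]]; rewrite big_geq // in zE; rewrite zE ltxx in hz.
pose P (i : (nat -> M) * M) c := ~ combination C N i.1 (i.2 - c *: i.1 N).
have cover : forall c, C N c ->
    \forall c' \near c & i \near near_family N.+1 p z0, P i c'.
  move=> c Cc.
  have nzc : ~ combination C N p (z0 - c *: p N).
    by move=> h; apply: nz0; apply/combinationS; exists c.
  have [r r0 Hr] := IH p _ nzc.
  have [del2 del20 H2] := cont_sub z0 (c *: p N) r0.
  have [U [HU [del1 del10 H1]]] := cont_scale c (p N) del20.
  pose m := Num.min r (Num.min del1 del2).
  have [mr mdel1 mdel2] : [/\ m <= r, m <= del1 & m <= del2].
    by rewrite !ge_min !lexx !orbT.
  exists (U, [set i : (nat -> M) * M | (forall j, (j < N.+1)%N -> d (p j) (i.1 j) < m)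
      /\ d z0 i.2 < m]).
    by split => //=; exists m => //=; rewrite /m !lt_min r0 del10 del20.
  move=> [c' [q z]] /= [Uc' [Hq Hz]]; apply: Hr => [j jN|].
  - exact: lt_le_trans (Hq j (ltnW jN)) mr.
  - apply: H2; first exact: lt_le_trans Hz mdel2.
    by apply: H1 => //; apply: lt_le_trans (Hq N (ltnSn N)) mdel1.
have [r r0 Hr] := (compact_near_coveringP (C N)).1 (C_compact N) _ _ P
  (near_family_filter _ _ _) cover.
exists r => // q z Hq Hz /combinationS [c CNc Hc].
exact: Hr (q, z) (conj Hq Hz) c CNc Hc.
Qed.

Section Construction.
Variables (B D : set M).
Hypothesis B_indep : lin_indep B.
Hypothesis B_span : spanning B.
Hypothesis B_uncountable : ~ countable B.
Hypothesis D_countable : countable D.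
Hypothesis D_dense : closure D = setT.

(* M is not spanned by a countable set: the basis vectors occurring in the
   decompositions of its elements would form a countable part of B spanning
   every element of B. *)
Lemma no_countable_spanning_set (S : set M) : countable S ->
  ~ (forall v, in_span S v).
Proof.
move=> cS Sspan.
have /choice [dec Hdec] : forall v, exists l : seq (K * M),
    (forall p, p \in l -> B p.2) /\ v = \sum_(p <- l) p.1 *: p.2.
  move=> v; have [s [c [sB ->]]] := B_span v.
  exists [seq (c x, x) | x <- s]; rewrite big_map; split => //.
  by move=> p /mapP [x xs ->]; exact: sB.
pose B' := \bigcup_(v in S) [set p.2 | p in [set` dec v]].
have cB' : countable B'.
  apply: bigcup_countable => // v _; apply/finite_set_countable.
  by apply: finite_image; exact: finite_seq.
have B'B : B' `<=` B by move=> x [v _ [p pl <-]]; exact: (Hdec v).1.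
have [b [Bb nB'b]] : exists b, B b /\ ~ B' b.
  apply/not_existsP => H; apply: B_uncountable; apply: sub_countable cB'.
  by apply: subset_card_le => b Bb; apply: contrapT => nb; apply: (H b).
apply: (indep_notin_span B_indep B'B Bb nB'b).
apply: in_span_trans (Sspan b) => v Sv; exists (dec v); split; last exact: (Hdec v).2.
by move=> p pl; exists v => //; exists p.
Qed.

(* Hence the span of a countable set has empty interior: if it contained a
   ball, it would be an open subgroup, and the countable set D together with
   S would span M. *)
Lemma countable_span_no_interior (S : set M) : countable S ->
  forall x e, 0 < e -> exists y, d x y < e /\ ~ in_span S y.
Proof.
move=> cS x e e0; apply/not_existsP => H.
have ball_x : forall y, d x y < e -> in_span S y.
  by move=> y hy; apply: contrapT => nSy; apply: (H y).
have [del del0 ball_0] : exists2 del, 0 < del & forall y, d 0 y < del -> in_span S y.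
  have [del del0 Hdel] := cont_add x 0 e0; exists del => // y hy.
  have Sxy : in_span S (x + y).
    by apply: ball_x; have := Hdel x y; rewrite addr0 dxx; apply.
  by rewrite -(addKr x y) addrC; apply: in_spanB Sxy (ball_x _ _); rewrite dxx.
apply: (no_countable_spanning_set (countable_setU D_countable cS)) => v.
have [del' del'0 Hdel'] := cont_sub v v del0.
have : closure D v by rewrite D_dense.
move=> /(_ _ (nbhs_ball v del'0)) [q [Dq hq]].
have Svq : in_span S (v - q).
  by apply: ball_0; have := Hdel' v q; rewrite subrr dxx; apply.
rewrite -(subrK q v); apply: in_spanD.
  by apply: in_span_trans Svq => y Sy; apply: in_span_mem; right.
by apply: in_span_mem; left.
Qed.

Definition free_family N (p : nat -> M) := forall c : nat -> K,
  \sum_(0 <= j < N) c j *: p j = 0 -> forall j, (j < N)%N -> c j = 0.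

Hypothesis K_division : division_ring K.

(* Any finite family can be moved by less than del to an independent one:
   each new member is chosen near its target outside the span of the
   previous ones. *)
Lemma free_perturbation (p : nat -> M) del : 0 < del -> forall N,
  exists q : nat -> M, (forall j, (j < N)%N -> d (p j) (q j) < del) /\
    free_family N q.
Proof.
move=> del0; elim=> [|N [q [Hq q_free]]]; first by exists p; split => // c _ j.
have cS : countable (q @` `I_N).
  by apply/finite_set_countable/finite_image; exact: finite_II.
have [y [hy nSy]] := countable_span_no_interior cS (p N) del0.
pose q' j := if j == N then y else q j.
have q'E c : \sum_(0 <= j < N) c j *: q' j = \sum_(0 <= j < N) c j *: q j.
  by apply: eq_big_nat => j /andP [_ jN]; rewrite /q' (ltn_eqF jN).
exists q'; split.
  move=> j; rewrite ltnS leq_eqVlt => /orP [/eqP ->|jN]; first by rewrite /q' eqxx.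
  by rewrite /q' (ltn_eqF jN); apply: Hq.
move=> c; rewrite big_nat_recr //= q'E {1}/q' eqxx => E.
have cN0 : c N = 0.
  apply: contrapT => /eqP cN; apply: nSy.
  have cNU : c N \is a GRing.unit by apply: K_division.
  have -> : y = \sum_(0 <= j < N) (- ((c N)^-1 * c j)) *: q j.
    rewrite -[y]scale1r -(mulVr cNU) -scalerA.
    have -> : c N *: y = - \sum_(0 <= j < N) c j *: q j.
      by apply/eqP; rewrite -addr_eq0 addrC E.
    rewrite scalerN scaler_sumr -sumrN.
    by apply: eq_bigr => j _; rewrite scalerA scaleNr.
  by apply: in_span_sum => j jN; exists j.
move: E; rewrite cN0 scale0r addr0 => E j.
by rewrite ltnS leq_eqVlt => /orP [/eqP ->|jN] //; exact: q_free E j jN.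
Qed.

Variable nrm : K -> R.
Hypothesis K_proper : proper_norm nrm.

Definition coef_box (k : R) (i0 j : nat) : set K :=
  if j == i0 then [set -1] else [set c | nrm (0 - c) <= k].

Lemma coef_box_compact k i0 j : compact (coef_box k i0 j).
Proof. by rewrite /coef_box; case: ifP => _; [exact: compact_set1 | exact: K_proper]. Qed.

Definition stage_free (n : nat) (X : nat -> M) (r : R) :=
  forall q : nat -> M, (forall j, (j < 2 ^ n)%N -> d (X j) (q j) < r) ->
  forall i0, (i0 < 2 ^ n)%N -> ~ combination (coef_box n%:R i0) (2 ^ n) q 0.

Lemma next_stage n (X : nat -> M) (r : R) : 0 < r ->
  exists (Y : nat -> M) (r' : R), [/\ 0 < r', r' <= r / 2,
    (forall j, (j < 2 ^ n.+1)%N -> d (X j./2) (Y j) < r / 4) &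
    stage_free n.+1 Y r'].
Proof.
move=> r0; have r40 : 0 < r / 4 by rewrite divr_gt0.
have [Y [HY Y_free]] := free_perturbation (fun j => X j./2) r40 (2 ^ n.+1).
have [rm rm0 Hrm] : exists2 rm, 0 < rm & forall i0, (i0 < 2 ^ n.+1)%N ->
    forall q : nat -> M, (forall j, (j < 2 ^ n.+1)%N -> d (Y j) (q j) < rm) ->
    ~ combination (coef_box n.+1%:R i0) (2 ^ n.+1) q 0.
  apply: uniform_radius => [i0 r1 r2 H r20 r21 q Hq|i0 i0N].
    by apply: H => j jN; exact: lt_le_trans (Hq j jN) r21.
  have [|r1 r10 H1] :=
    @combination_robust _ (@coef_box_compact n.+1%:R i0) (2 ^ n.+1) Y 0.
    move=> [c [Hc /esym /Y_free /(_ i0 i0N)]].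
    by have := Hc i0 i0N; rewrite /coef_box eqxx => -> /eqP; rewrite oppr_eq0 oner_eq0.
  by exists r1 => // q Hq; apply: H1; rewrite ?dxx.
exists Y, (Num.min (r / 2) rm); split => //.
- by rewrite lt_min rm0 divr_gt0.
- by rewrite ge_min lexx.
- move=> q Hq i0 i0N; apply: (Hrm i0 i0N) => j jN.
  by apply: lt_le_trans (Hq j jN) _; rewrite ge_min lexx orbT.
Qed.

Hypothesis nrm_ge0 : forall x, 0 <= nrm x.
Hypothesis nrm_eq0 : forall a b, nrm (a - b) = 0 <-> a = b.
Hypothesis d_complete : forall u : nat -> M,
  (forall e : R, 0 < e -> exists N : nat,
     forall m n, (N <= m)%N -> (N <= n)%N -> d (u m) (u n) < e) ->
  exists l : M, u @ \oo --> l.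

Section Tree.
Variables (X : nat -> nat -> M) (r : nat -> R).
Hypothesis r_pos : forall n, 0 < r n.
Hypothesis r_half : forall n, r n.+1 <= r n / 2.
Hypothesis X_link : forall n j, (j < 2 ^ n.+1)%N ->
  d (X n j./2) (X n.+1 j) < r n / 4.
Hypothesis X_free : forall n, stage_free n.+1 (X n.+1) (r n.+1).

Definition branch (a : cantor_space) n := X n (code a n).

(* Consecutive branch points are r n / 4 apart while r halves: telescoping
   bound between levels n and n + m. *)
Lemma branch_bound a n m :
  d (branch a n) (branch a (n + m)) <= r n / 2 - r (n + m) / 2.
Proof.
elim: m => [|m IH]; first by rewrite addn0 dxx subrr.
have step : d (branch a (n + m)) (branch a (n + m).+1) < r (n + m) / 4.
  by rewrite /branch -[code a (n + m)](code_half a); apply/X_link/code_lt.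
have := d_tri (branch a n) (branch a (n + m)) (branch a (n + m).+1).
by rewrite addnS; have := r_half (n + m); lra.
Qed.

(* The radii tend to 0, since r n <= r 0 / 2^n. *)
Lemma r_small e : 0 < e -> exists n, r n < e.
Proof.
move=> e0.
have r_geom : forall n, r n * (2 ^ n)%:R <= r 0%N.
  elim=> [|n IH]; first by rewrite expn0 mulr1.
  apply: le_trans IH; rewrite expnS natrM mulrA.
  by apply: ler_wpM2r; [exact: ler0n | have := r_half n; lra].
pose n := Num.Def.archi_bound (r 0%N / e).
have hn : r 0%N < e * n%:R.
  rewrite -ltr_pdivrMl // mulrC; apply: archi_boundP.
  by rewrite divr_ge0 // ltW.
exists n.
have := r_geom n; have := r_pos n.
have P0 : 0 < (2 ^ n)%:R :> R by rewrite ltr0n expn_gt0.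
have eNP : e * n%:R <= e * (2 ^ n)%:R by rewrite ler_pM2l // ler_nat ltnW // ltn_expl.
set N := n%:R in hn eNP *; set P := (2 ^ n)%:R in P0 eNP *.
nra.
Qed.

Lemma branch_cvg a : exists l : M, branch a @ \oo --> l.
Proof.
apply: d_complete => e e0; have [n hn] := r_small e0.
exists n => m m' hm hm'.
have := d_tri (branch a m) (branch a n) (branch a m').
rewrite (d_sym (branch a m) (branch a n)).
have := branch_bound a n (m - n); rewrite subnKC //.
have := branch_bound a n (m' - n); rewrite subnKC //.
by have := r_pos m; have := r_pos m'; lra.
Qed.

Variable f : cantor_space -> M.
Hypothesis f_lim : forall a, branch a @ \oo --> f a.

Lemma f_bound a n : d (branch a n) (f a) <= r n / 2.
Proof.
apply: (lim_le (n := n) (@f_lim a)) => m nm.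
rewrite -(subnKC nm); have := branch_bound a n (m - n); have := r_pos (n + (m - n)).
lra.
Qed.

Lemma f_close a b n : (forall i, (i < n)%N -> a i = b i) -> d (f a) (f b) <= r n.
Proof.
move=> H; have E : branch a n = branch b n by rewrite /branch (code_eq H).
have := d_tri (f a) (branch a n) (f b); rewrite (d_sym (f a) (branch a n)) E.
by have := f_bound a n; have := f_bound b n; rewrite E; lra.
Qed.

(* A combination of images f a, the a's having distinct codes at level n, is
   a combination of a family close to level n of the tree (f a replacing the
   point of index code a n, coefficients 0 on the unused indices). *)
Lemma level_relation (L : seq (K * cantor_space)) n :
  uniq [seq code p.2 n | p <- L] ->
  exists (q : nat -> M) (c : nat -> K),
  [/\ forall j, (j < 2 ^ n)%N -> d (X n j) (q j) < r n,
      forall p, p \in L -> c (code p.2 n) = p.1,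
      forall j, j \notin [seq code p.2 n | p <- L] -> c j = 0
    & \sum_(0 <= j < 2 ^ n) c j *: q j = \sum_(p <- L) p.1 *: f p.2].
Proof.
set h := fun p : K * cantor_space => code p.2 n; set codes := map h L => uL.
pose p0 : K * cantor_space := (0, fun=> false).
pose entry j := nth p0 L (index j codes).
have entry_in j : j \in codes -> entry j \in L /\ h (entry j) = j.
  move=> jc; have ilt : (index j codes < size L)%N by rewrite -(size_map h) index_mem.
  by split; [exact: mem_nth | rewrite -(nth_map p0 0%N) // nth_index].
have entryE p : p \in L -> entry (h p) = p.
  move=> pL; have [entryL hE] := entry_in _ (map_f h pL).
  exact: (uniq_map_inj_in uL).
exists (fun j => if j \in codes then f (entry j).2 else X n j),
  (fun j => if j \in codes then (entry j).1 else 0); split.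
- move=> j jN; case: ifP => jc; last by rewrite dxx.
  have [_ E] := entry_in j jc; have := f_bound (entry j).2 n.
  by rewrite /branch -/(h _) E; have := r_pos n; lra.
- by move=> p pL; rewrite (map_f h pL) entryE.
- by move=> j /negbTE ->.
- apply: (sum_over_image (h := h)) => // [p _|p pL|j /negbTE ->].
  + exact: code_lt.
  + by rewrite (map_f h pL) entryE.
  + by rewrite scale0r.
Qed.

(* At a deep enough level the points have distinct codes and the
   coefficients have norm below the level, which stage_free forbids. *)
Lemma branch_limits_free (L : seq (K * cantor_space)) (p0 : K * cantor_space) :
  uniq (map snd (p0 :: L)) -> p0.1 = -1 -> \sum_(p <- p0 :: L) p.1 *: f p.2 != 0.
Proof.
set L0 := p0 :: L => uL p01; apply/eqP => sum0.
have [n1 Hn1] : exists n1, forall n, (n1 <= n)%N ->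
    forall p, p \in L0 -> nrm (0 - p.1) <= n%:R.
  apply: eventually_forall_in => p _; exists (Num.Def.archi_bound (nrm (0 - p.1))).
  move=> n hn; apply/ltW/(lt_le_trans (archi_boundP (nrm_ge0 _))).
  by rewrite ler_nat.
have [n2 Hn2] := codes_uniq uL.
pose n := maxn n1 n2.
have un : uniq [seq code p.2 n.+1 | p <- L0].
  by rewrite (map_comp (code^~ n.+1) snd); apply: Hn2; rewrite leqW ?leq_maxr.
have [q [c [qX cL c0 sumE]]] := level_relation un.
apply: (X_free qX (code_lt p0.2 n.+1)); exists c; split; last by rewrite sumE sum0.
move=> j jN; rewrite /coef_box; case: eqP => [->|_]; first by rewrite cL ?mem_head.
case: (boolP (j \in [seq code p.2 n.+1 | p <- L0])) => [/mapP [p pL ->]|/c0 ->].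
  by rewrite cL //; apply: Hn1 => //; apply/leqW/leq_maxl.
by rewrite /= (proj2 (nrm_eq0 0 0) erefl) ler0n.
Qed.

Lemma f_inj : injective f.
Proof.
move=> a b E; apply: contrapT => /eqP ab.
have := @branch_limits_free [:: (1, b)] (-1, a).
by rewrite big_cons big_seq1 /= E scaleN1r scale1r addNr eqxx inE andbT ab => /(_ isT erefl).
Qed.

(* The image of f is linearly independent: normalize a relation so that one
   coefficient is -1 and apply branch_limits_free to the preimages. *)
Lemma range_indep : lin_indep (range f).
Proof.
move=> s c us sf sum0 x0 x0s; apply: contrapT => /eqP cx0.
have /choice [g gK] : forall x, exists a, x \in s -> f a = x.
  move=> x; case: (boolP (x \in s)) => [/sf [a _ <-]|_]; first by exists a.
  by exists (fun=> false).
have cx0U : c x0 \is a GRing.unit by exact: K_division.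
pose u := (c x0)^-1; pose s' := rem x0 s.
have s's x : x \in s' -> x \in s by move/mem_rem.
pose l := [seq (- (u * c x), g x) | x <- s'].
have ul : uniq (map snd ((-1, g x0) :: l)).
  have -> : map snd ((-1, g x0) :: l) = map g (x0 :: s') by rewrite /= -map_comp.
  rewrite (map_inj_in_uniq (f := g)) -?(perm_uniq (perm_to_rem x0s)) //.
  move=> x y; rewrite -!(perm_mem (perm_to_rem x0s)) => xs ys /(congr1 f).
  by rewrite !gK.
have : \sum_(p <- (-1, g x0) :: l) p.1 *: f p.2 = 0.
  rewrite big_cons big_map gK // (perm_big _ (perm_to_rem x0s)) /= in sum0 *.
  have -> : -1 *: x0 = - u *: (c x0 *: x0) by rewrite scalerA mulNr mulVr ?scaleN1r.
  under eq_big_seq => x xs' do rewrite gK ?s's // scaleNr -scalerA.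
  rewrite sumrN -scaler_sumr scaleNr -opprD -scalerDr.
  by move: sum0; rewrite big_cons -/s' => ->; rewrite scaler0 oppr0.
by move/eqP; apply/negP/(branch_limits_free ul).
Qed.

(* f is continuous: the points near a share a long prefix with a. *)
Lemma f_cont : continuous f.
Proof.
move=> a U /d_top [e e0 HU]; have [n hn] := r_small e0.
apply: filterS (prefix_nbhs a n) => b Hb; apply: HU.
by apply: le_lt_trans hn; apply: f_close => i iN; rewrite Hb.
Qed.

(* The image of the compact Cantor space is compact, hence closed; it has no
   isolated point since changing a far digit moves the image arbitrarily
   little. *)
Lemma range_perfect : perfect_set (range f).
Proof.
have closed_range : closed (range f).
  apply: compact_closed; first exact: metric_hausdorff.
  apply: continuous_compact; last exact: cantor_space_compact.
  exact: continuous_subspaceT f_cont.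
split => //; apply/seteqP; split.
  move=> x Lx; rewrite ((closure_id (range f)).1 closed_range).
  by rewrite closure_isolated_limit_point; right.
move=> _ [a _ <-] U /d_top [e e0 HU]; have [n hn] := r_small e0.
pose b : cantor_space := fun i => if i == n then ~~ a i else a i.
exists (f b); split.
- apply/eqP => /f_inj /(congr1 (fun g => g n)); rewrite /b eqxx.
  by case: (a n).
- by exists b.
- apply: HU; apply: le_lt_trans hn; apply: f_close => i iN.
  by rewrite /b (ltn_eqF iN).
Qed.

End Tree.

(* Iterating next_stage from a single point with radius 1 yields the tree;
   the limits along its branches form the required set. *)
Lemma perfect_independent_set :
  exists P : set M, [/\ P !=set0, perfect_set P & lin_indep P].
Proof.
have /choice [next Hnext] : forall s : nat * ((nat -> M) * R),
    exists t : (nat -> M) * R, 0 < s.2.2 -> [/\ 0 < t.2, t.2 <= s.2.2 / 2,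
      (forall j, (j < 2 ^ s.1.+1)%N -> d (s.2.1 j./2) (t.1 j) < s.2.2 / 4)
      & stage_free s.1.+1 t.1 t.2].
  move=> [n [Y r]] /=; have [r0|_] := ltP 0 r; last by exists (Y, r).
  by have [Y' [r' H]] := next_stage n Y r0; exists (Y', r').
pose st := fix st n := if n is n'.+1 then next (n', st n')
  else ((fun=> 0) : nat -> M, 1 : R).
pose X n := (st n).1; pose r n := (st n).2.
have r_pos n : 0 < r n.
  by elim: n => [|n IH]; [exact: ltr01 | have [] := Hnext (n, st n) IH].
have Hst n := Hnext (n, st n) (r_pos n).
have r_half n : r n.+1 <= r n / 2 by case: (Hst n).
have X_link n : forall j, (j < 2 ^ n.+1)%N -> d (X n j./2) (X n.+1 j) < r n / 4.
  by case: (Hst n).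
have X_free n : stage_free n.+1 (X n.+1) (r n.+1) by case: (Hst n).
have /choice [f f_lim] := branch_cvg r_pos r_half X_link.
have f_perfect := range_perfect r_pos r_half X_link X_free f_lim.
have f_indep := range_indep r_pos r_half X_link X_free f_lim.
by exists (range f); split => //; exists (f (fun=> false)), (fun=> false).
Qed.

End Construction.
End ModuleMetric.

Unset Implicit Arguments.
Set Strict Implicit.

Theorem corollary5p2 (R : realType) (K : topUnitRingType) (nrm : K -> R)
  (M : topLmodType K) :
  proper_normed_division_ring nrm ->
  topological_module M ->
  polish_space R M ->
  uncountable_dim M ->
  exists P : set M, [/\ P !=set0, perfect_set P & lin_indep P].
Proof.
move=> [K_div [nrm_ge0 nrm_eq0 _ _ _] _ K_proper] [add_c opp_c scale_c].
move=> [[D [D_countable D_dense]] [d [[d_ge0 d_eq0 d_sym d_tri] d_top d_complete]]].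
move=> [B [[B_indep B_span] B_uncountable]].
exact: (perfect_independent_set d_ge0 d_eq0 d_sym d_tri d_top add_c opp_c scale_c
  B_indep B_span B_uncountable D_countable D_dense K_div K_proper nrm_ge0 nrm_eq0
  d_complete).
Qed.
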